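(* Let $\Bbbk$ be a commutative ring. The negative-one shift functor $\widetilde{S}_{-1}:\mathrm{FI}\text{-}\mathrm{Mod}\to\mathrm{FI}\text{-}\mathrm{Mod}$ is a left adjoint of the shift functor $S:\mathrm{FI}\text{-}\mathrm{Mod}\to\mathrm{FI}\text{-}\mathrm{Mod}$; that is, there is an isomorphism $\mathrm{Hom}_{\mathrm{FI}\text{-}\mathrm{Mod}}(\widetilde{S}_{-1}V,W)\cong \mathrm{Hom}_{\mathrm{FI}\text{-}\mathrm{Mod}}(V,SW)$ natural in the $\mathrm{FI}$-modules $V$ and $W$.
   Context: $\mathrm{FI}$ is the category whose objects are finite sets and whose morphisms are injective maps. An $\mathrm{FI}$-module is a functor from $\mathrm{FI}$ to the category of $\Bbbk$-modules; homomorphisms are natural transformations; $\mathrm{FI}\text{-}\mathrm{Mod}$ denotes this category. For an $\mathrm{FI}$-module $V$ and a finite set $X$ write $V_X=V(X)$, and for an injection $f$ write $f_*=V(f)$. Fix a one-element set $\{\star\}$. The shift functor is $SV=V\circ\sigma$, where $\sigma:\mathrm{FI}\to\mathrm{FI}$ sends $X\mapsto X\sqcup\{\star\}$ and $f\mapsto f\sqcup \mathrm{id}_{\{\star\}}$; so $(SV)_X=V_{X\sqcup\{\star\}}$. The negative-one shift functor is defined by $(\widetilde{S}_{-1}V)_X=\bigoplus_{x\in X}V_{X\setminus\{x\}}$, and for an injection $f:X\to Y$, the map $f_*:(\widetilde{S}_{-1}V)_X\to(\widetilde{S}_{-1}V)_Y$ restricts on the summand $V_{X\setminus\{x\}}$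 to $(f|_{X\setminus\{x\}})_*:V_{X\setminus\{x\}}\to V_{Y\setminus\{f(x)\}}$ (landing in the summand indexed by $f(x)$); on homomorphisms it acts componentwise. *)

From HB Require Import structures.
From mathcomp Require Import all_boot all_order all_algebra.
Set Implicit Arguments. Unset Strict Implicit. Unset Printing Implicit Defensive.
Import GRing.Theory.
Local Open Scope ring_scope.

Section DSum.
Variables (R : pzRingType) (I : finType) (T : I -> lmodType R).

Definition dsum := {dffun forall i : I, T i}.
HB.instance Definition _ := Choice.on dsum.

Definition dsum_zero : dsum := [ffun i => (0 : T i)].
Definition dsum_add (s t : dsum) : dsum := [ffun i => s i + t i].
Definition dsum_opp (s : dsum) : dsum := [ffun i => - s i].
Definition dsum_scale (a : R) (s : dsum) : dsum := [ffun i => a *: s i].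

Lemma dsum_addA : associative dsum_add.
Proof. by move=> s t u; apply/ffunP => i; rewrite !ffunE addrA. Qed.
Lemma dsum_addC : commutative dsum_add.
Proof. by move=> s t; apply/ffunP => i; rewrite !ffunE addrC. Qed.
Lemma dsum_add0 : left_id dsum_zero dsum_add.
Proof. by move=> s; apply/ffunP => i; rewrite !ffunE add0r. Qed.
Lemma dsum_addN : left_inverse dsum_zero dsum_opp dsum_add.
Proof. by move=> s; apply/ffunP => i; rewrite !ffunE addNr. Qed.

HB.instance Definition _ :=
  GRing.isZmodule.Build dsum dsum_addA dsum_addC dsum_add0 dsum_addN.

Lemma dsum_scaleA a b (s : dsum) :
  dsum_scale a (dsum_scale b s) = dsum_scale (a * b) s.
Proof. by apply/ffunP => i; rewrite !ffunE scalerA. Qed.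
Lemma dsum_scale1 : left_id 1 dsum_scale.
Proof. by move=> s; apply/ffunP => i; rewrite !ffunE scale1r. Qed.
Lemma dsum_scaleDr : right_distributive dsum_scale +%R.
Proof. by move=> a s t; apply/ffunP => i; rewrite !ffunE scalerDr. Qed.
Lemma dsum_scaleDl (s : dsum) :
  {morph dsum_scale^~ s : a b / a + b}.
Proof. by move=> a b; apply/ffunP => i; rewrite !ffunE scalerDl. Qed.

HB.instance Definition _ :=
  GRing.Zmodule_isLmodule.Build R dsum dsum_scaleA dsum_scale1
    dsum_scaleDr dsum_scaleDl.
End DSum.

Unset Implicit Arguments.
Record Inj (X Y : finType) := { inj_fun :> X -> Y ; inj_inj : injective inj_fun }.
Arguments inj_fun {X Y} i _.
Arguments inj_inj {X Y} i _ _ _.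

Definition inj_id (X : finType) : Inj X X := Build_Inj X X id (@inj_id X).
Definition inj_comp {X Y Z : finType} (f : Inj X Y) (g : Inj Y Z) : Inj X Z :=
  Build_Inj X Z (g \o f) (inj_comp (inj_inj g) (inj_inj f)).

Definition sum1_fun {X Y : finType} (f : X -> Y) (z : (X + unit)%type) :
  (Y + unit)%type := match z with inl x => inl (f x) | inr u => inr u end.
Lemma sum1_inj {X Y : finType} (f : Inj X Y) : injective (sum1_fun f).
Proof.
case=> [x|[]] [y|[]] //= [].
by move=> /(inj_inj f) ->.
Qed.
Definition inj_sum1 {X Y : finType} (f : Inj X Y) : Inj (X + unit)%type (Y + unit)%type :=
  Build_Inj _ _ (sum1_fun f) (sum1_inj f).

Definition minus1 {X : finType} (x : X) : finType := {y : X | y != x}.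

Definition restr_fun {X Y : finType} (f : Inj X Y) (x : X) (y : minus1 x) :
  minus1 (f x).
Proof.
exists (f (val y)); rewrite (inj_eq (inj_inj f)); exact: valP y.
Defined.
Lemma restr_inj {X Y : finType} (f : Inj X Y) (x : X) : injective (restr_fun f x).
Proof.
move=> y1 y2 /(congr1 val) /= /(inj_inj f) e; exact: val_inj.
Qed.
Definition inj_restr {X Y : finType} (f : Inj X Y) (x : X) : Inj (minus1 x) (minus1 (f x)) :=
  Build_Inj _ _ (restr_fun f x) (restr_inj f x).

Section FIMod.
Variable R : comPzRingType.

Record FIData := {
  fobj : finType -> lmodType R ;
  fmap : forall (X Y : finType), Inj X Y -> fobj X -> fobj Y }.
Arguments fmap f {X Y} : rename.

Definition IsFIMod (V : FIData) : Prop :=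
  [/\ (forall (X Y : finType) (f : Inj X Y) (a : R) (u v : fobj V X),
         fmap V f (a *: u + v) = a *: fmap V f u + fmap V f v),
      (forall (X : finType) (v : fobj V X), fmap V (inj_id X) v = v) &
      (forall (X Y Z : finType) (f : Inj X Y) (g : Inj Y Z) (v : fobj V X),
         fmap V (inj_comp f g) v = fmap V g (fmap V f v))].

Record FIMod := { fidata :> FIData ; fiax : IsFIMod fidata }.

Record FIHom (V W : FIData) := {
  hfun : forall (X : finType), fobj V X -> fobj W X ;
  hlin : forall (X : finType) (a : R) (u v : fobj V X),
           hfun X (a *: u + v) = a *: hfun X u + hfun X v ;
  hnat : forall (X Y : finType) (f : Inj X Y) (v : fobj V X),
           hfun Y (fmap V f v) = fmap W f (hfun X v) }.
Arguments hfun {V W} f X : rename.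
Arguments hlin {V W} f X : rename.
Arguments hnat {V W} f {X Y} : rename.
Arguments Build_FIHom {V W}.

Definition hcomp_fun {U V W : FIData} (a : FIHom U V) (b : FIHom V W) X (u : fobj U X) :=
  hfun b X (hfun a X u).
Lemma hcomp_lin {U V W : FIData} (a : FIHom U V) (b : FIHom V W) X c (u v : fobj U X) :
  hcomp_fun a b X (c *: u + v) = c *: hcomp_fun a b X u + hcomp_fun a b X v.
Proof. by rewrite /hcomp_fun !hlin. Qed.
Lemma hcomp_nat {U V W : FIData} (a : FIHom U V) (b : FIHom V W) X Y (f : Inj X Y) u :
  hcomp_fun a b Y (fmap U f u) = fmap W f (hcomp_fun a b X u).
Proof. by rewrite /hcomp_fun !hnat. Qed.
Definition hcomp {U V W : FIData} (a : FIHom U V) (b : FIHom V W) : FIHom U W :=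
  Build_FIHom (hcomp_fun a b) (hcomp_lin a b) (hcomp_nat a b).

Definition Shift (V : FIData) : FIData :=
  {| fobj := fun X => fobj V (X + unit)%type ;
     fmap := fun X Y f => fmap V (inj_sum1 f) |}.

Definition ShiftH_fun {V W : FIData} (b : FIHom V W) (X : finType) :
  fobj (Shift V) X -> fobj (Shift W) X := hfun b (X + unit)%type.
Lemma ShiftH_lin {V W : FIData} (b : FIHom V W) X c (u v : fobj (Shift V) X) :
  ShiftH_fun b X (c *: u + v) = c *: ShiftH_fun b X u + ShiftH_fun b X v.
Proof. exact: (hlin b (X + unit)%type). Qed.
Lemma ShiftH_nat {V W : FIData} (b : FIHom V W) X Y (f : Inj X Y) (u : fobj (Shift V) X) :
  ShiftH_fun b Y (fmap (Shift V) f u) = fmap (Shift W) f (ShiftH_fun b X u).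
Proof. exact: (hnat b (inj_sum1 f)). Qed.
Definition ShiftH {V W : FIData} (b : FIHom V W) : FIHom (Shift V) (Shift W) :=
  Build_FIHom (ShiftH_fun b) (ShiftH_lin b) (ShiftH_nat b).

Definition NShift_obj (V : FIData) (X : finType) : lmodType R :=
  dsum (fun x : X => fobj V (minus1 x)).

Definition transp (V : FIData) {Y : finType} {y1 y2 : Y} (e : y1 = y2)
  (v : fobj V (minus1 y1)) : fobj V (minus1 y2) :=
  eq_rect y1 (fun t => fobj V (minus1 t)) v y2 e.

(* the summand indexed by x is sent by (f|_{X\{x}})_* into the summand indexed by f x *)
Definition NShift_map (V : FIData) (X Y : finType) (f : Inj X Y)
  (s : NShift_obj V X) : NShift_obj V Y :=
  [ffun y : Y => \sum_(x : X)
     match f x =P y with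
     | ReflectT e => transp V e (fmap V (inj_restr f x) (s x))
     | ReflectF _ => 0
     end].

Definition NShift (V : FIData) : FIData :=
  {| fobj := NShift_obj V ; fmap := NShift_map V |}.

Definition NShiftH_fun {V W : FIData} (a : FIHom V W) (X : finType)
  (s : fobj (NShift V) X) : fobj (NShift W) X :=
  [ffun x : X => hfun a (minus1 x) (s x)].
Lemma NShiftH_lin {V W : FIData} (a : FIHom V W) X c (u v : fobj (NShift V) X) :
  NShiftH_fun a X (c *: u + v) = c *: NShiftH_fun a X u + NShiftH_fun a X v.
Proof.
apply/ffunP => x; rewrite /NShiftH_fun.
rewrite [LHS]ffunE.
have -> : (c *: u + v) x = c *: u x + v x by rewrite /GRing.add /= /GRing.scale /= !ffunE.
rewrite hlin.
by rewrite /GRing.add /= /GRing.scale /= !ffunE.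
Qed.

Lemma hadd {V W : FIData} (a : FIHom V W) X (u v : fobj V X) :
  hfun a X (u + v) = hfun a X u + hfun a X v.
Proof. by rewrite -[u]scale1r hlin !scale1r. Qed.
Lemma hzero {V W : FIData} (a : FIHom V W) X : hfun a X 0 = 0.
Proof.
have := hadd a X 0 0; rewrite addr0 => /(congr1 (fun t => t - hfun a X 0)).
by rewrite subrr addrK => ->.
Qed.
Lemma hsum {V W : FIData} (a : FIHom V W) X (I : finType) (F : I -> fobj V X) :
  hfun a X (\sum_(i : I) F i) = \sum_(i : I) hfun a X (F i).
Proof.
elim/big_rec2: _ => [|i w1 w2 _ <-]; [exact: hzero | exact: hadd].
Qed.

Lemma NShiftH_nat {V W : FIData} (a : FIHom V W) X Y (f : Inj X Y) (u : fobj (NShift V) X) :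
  NShiftH_fun a Y (fmap (NShift V) f u) = fmap (NShift W) f (NShiftH_fun a X u).
Proof.
apply/ffunP => y; rewrite /NShiftH_fun /= /NShift_map !ffunE hsum.
apply: eq_bigr => x _; rewrite ffunE.
case: (f x =P y) => [e|_]; last exact: hzero.
by destruct e; rewrite /transp /= hnat.
Qed.
Definition NShiftH {V W : FIData} (a : FIHom V W) : FIHom (NShift V) (NShift W) :=
  Build_FIHom (NShiftH_fun a) (NShiftH_lin a) (NShiftH_nat a).

End FIMod.

(** The summand of [(S~_{-1} V)_X] at [x] is [V_{X \ x}], while
    [(S W)_{X \ x} = W_{(X \ x) ⊔ ⋆}] is identified with [W_X] by sending [⋆] to [x].
    Hence a map [phi : S~_{-1} V -> W] gives [V_X -> W_{X ⊔ ⋆}] by restricting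
    [phi] to the summand at [⋆] of [(S~_{-1} V)_{X ⊔ ⋆}], whose complement is [X];
    conversely [psi : V -> S W] gives, on the summand at [x], the composite
    [V_{X \ x} -> W_{(X \ x) ⊔ ⋆} -> W_X].  Since every element of a direct sum is
    the sum of its components, the naturality of [phi] and [psi] makes these two
    constructions mutually inverse, and both commute with pre- and post-composition. *)
From Pilot Require Import Defs.
From HB Require Import structures.
From mathcomp Require Import all_boot all_order all_algebra.
From Stdlib Require Import FunctionalExtensionality ProofIrrelevance.
Import GRing.Theory.
Local Open Scope ring_scope.

Section LinearMaps.
Variables (R : pzRingType) (U V : lmodType R) (f : U -> V).
Hypothesis f_lin : forall a u v, f (a *: u + v) = a *: f u + f v.

Lemma linD u v : f (u + v) = f u + f v.
Proof. by rewrite -[u]scale1r f_lin !scale1r. Qed.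

Lemma lin0 : f 0 = 0.
Proof. by apply/(addrI (f 0)); rewrite -linD !addr0. Qed.

Lemma lin_sum (I : finType) (F : I -> U) : f (\sum_(i : I) F i) = \sum_(i : I) f (F i).
Proof. exact: (big_morph f linD lin0). Qed.

End LinearMaps.

Arguments lin0 {R U V f}.
Arguments lin_sum {R U V f} f_lin {I}.

Section ShiftAdjunction.
Variable R : comPzRingType.

Local Notation fm V f := (fmap R V _ _ f).
Local Notation hf a X := (hfun R _ _ a X).

Lemma inj_ext (X Y : finType) (f g : Inj X Y) : f =1 g -> f = g.
Proof.
case: f g => f f_inj [g g_inj] /= /functional_extensionality efg; subst g.
by rewrite (proof_irrelevance _ f_inj g_inj).
Qed.

Lemma fihom_ext (V W : FIData R) (a b : FIHom R V W) :
  (forall X v, hf a X v = hf b X v) -> a = b.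
Proof.
case: a b => a a_lin a_nat [b b_lin b_nat] /= eab.
have {}eab : a = b.
  by apply: functional_extensionality_dep => X; apply: functional_extensionality.
subst b; f_equal; exact: proof_irrelevance.
Qed.

Section FunctorLaws.
Variable V : FIMod R.

Lemma fmap_lin X Y (f : Inj X Y) a (u v : fobj R V X) :
  fm V f (a *: u + v) = a *: fm V f u + fm V f v.
Proof. by case: (fiax R V) => lin _ _; apply: lin. Qed.

Lemma fmap_comp X Y Z (f : Inj X Y) (g : Inj Y Z) (v : fobj R V X) :
  fm V (Defs.inj_comp f g) v = fm V g (fm V f v).
Proof. by case: (fiax R V) => _ _ comp; apply: comp. Qed.

Lemma fmap_eq X Y (f g : Inj X Y) (v : fobj R V X) : f =1 g -> fm V f v = fm V g v.
Proof. by move=> /inj_ext ->. Qed.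

Lemma fmap_id_eq X (h : Inj X X) (v : fobj R V X) : h =1 id -> fm V h v = v.
Proof.
move=> /(@inj_ext _ _ h (Defs.inj_id X)) ->.
by case: (fiax R V) => _ id_law _; apply: id_law.
Qed.

End FunctorLaws.

Arguments fmap_lin {V X Y}.

(** The summand type depends on the index, so [v] is transported along [z = y]. *)
Definition summand_in (V : FIData R) (X : finType) (z : X) (v : fobj R V (minus1 z)) :
  NShift_obj R V X :=
  [ffun y : X => (match z =P y with ReflectT e => transp R V e v | ReflectF _ => 0 end
                   : fobj R V (minus1 y))].
Arguments summand_in V {X} z v.

Lemma summand_in_self (V : FIData R) (X : finType) (z : X) v : summand_in V z v z = v.
Proof. by rewrite ffunE; case: (z =P z) => // e; rewrite (eq_axiomK e). Qed.

Lemma summand_in_other (V : FIData R) (X : finType) (z y : X) v :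
  z != y -> summand_in V z v y = 0.
Proof. by move=> /eqP zy; rewrite ffunE; case: (z =P y). Qed.

Lemma dsum_eval_lin (V : FIData R) (X : finType) (y : X) a (s t : NShift_obj R V X) :
  (a *: s + t) y = a *: s y + t y.
Proof. by rewrite /GRing.add /GRing.scale /= !ffunE. Qed.
Arguments dsum_eval_lin {V X}.

Lemma summand_in_lin (V : FIData R) (X : finType) (z : X) a u v :
  summand_in V z (a *: u + v) = a *: summand_in V z u + summand_in V z v.
Proof.
apply/ffunP => y; rewrite dsum_eval_lin !ffunE.
by case: (z =P y) => [e|_]; [destruct e | rewrite scaler0 addr0].
Qed.

Lemma sum_summand_in (V : FIData R) X (s : NShift_obj R V X) :
  \sum_(x : X) summand_in V x (s x) = s.
Proof.
apply/ffunP => y; rewrite -/(fun_of_fin _ y).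
rewrite (lin_sum (dsum_eval_lin y)) (bigD1 y) //= summand_in_self big1 ?addr0 //.
by move=> x xy; apply: summand_in_other.
Qed.
Arguments sum_summand_in {V X}.

Lemma NShift_map_lin (V : FIMod R) X Y (f : Inj X Y) a (s t : NShift_obj R V X) :
  NShift_map R V X Y f (a *: s + t)
  = a *: NShift_map R V X Y f s + NShift_map R V X Y f t.
Proof.
apply/ffunP => y; rewrite dsum_eval_lin !ffunE scaler_sumr -big_split /=.
apply: eq_bigr => x _; rewrite dsum_eval_lin fmap_lin.
by case: (f x =P y) => [e|_]; [destruct e | rewrite scaler0 addr0].
Qed.
Arguments NShift_map_lin {V X Y}.

Lemma NShift_map_summand_in (V : FIMod R) X Y (f : Inj X Y) (z : X) v :
  NShift_map R V X Y f (summand_in V z v) = summand_in V (f z) (fm V (inj_restr f z) v).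
Proof.
apply/ffunP => y; rewrite ffunE (bigD1 z) //= big1 ?addr0.
  by rewrite summand_in_self ffunE.
move=> x xz; rewrite summand_in_other 1?eq_sym // (lin0 (fmap_lin _)).
by case: (f x =P y) => // e; destruct e.
Qed.

Lemma NShiftH_summand_in (V W : FIData R) (a : FIHom R V W) (X : finType) (z : X) v :
  NShiftH_fun R a X (summand_in V z v) = summand_in W z (hf a _ v).
Proof.
apply/ffunP => y; rewrite !ffunE.
by case: (z =P y) => [e|_]; [destruct e | exact: hzero].
Qed.

Definition star_compl_fun (X : finType) (x : X) : minus1 (inr tt : (X + unit)%type) :=
  exist _ (inl x) isT.
Lemma star_compl_inj (X : finType) : injective (@star_compl_fun X).
Proof. by move=> x y /(congr1 val) [->]. Qed.
Definition star_compl (X : finType) := Build_Inj _ _ _ (@star_compl_inj X).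

Definition fill_star_fun (X : finType) (x : X) (z : (minus1 x + unit)%type) : X :=
  if z is inl y then val y else x.
Arguments fill_star_fun {X}.
Lemma fill_star_inj (X : finType) (x : X) : injective (fill_star_fun x).
Proof.
case=> [y1|[]] [y2|[]] //= e; first by rewrite (val_inj e).
- by move: (valP y1); rewrite /= e eqxx.
- by move: (valP y2); rewrite /= -e eqxx.
Qed.
Definition fill_star (X : finType) (x : X) := Build_Inj _ _ _ (@fill_star_inj X x).
Arguments fill_star {X}.

Section Transposition.
Variables V W : FIMod R.

Definition toShift_fun (phi : FIHom R (NShift R V) W) X (v : fobj R V X) :
  fobj R (Shift R W) X :=
  hf phi (X + unit)%type (summand_in V (inr tt) (fm V (star_compl X) v)).

Lemma toShift_lin phi X a u v :
  toShift_fun phi X (a *: u + v) = a *: toShift_fun phi X u + toShift_fun phi X v.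
Proof. by rewrite /toShift_fun fmap_lin summand_in_lin hlin. Qed.

Lemma toShift_nat phi X Y (f : Inj X Y) v :
  toShift_fun phi Y (fm V f v) = fm (Shift R W) f (toShift_fun phi X v).
Proof.
rewrite /toShift_fun /= -(hnat _ _ _ phi) /= NShift_map_summand_in -!fmap_comp.
by congr (hf phi _ (summand_in V _ _)); apply: fmap_eq => x; apply: val_inj.
Qed.

Definition toShift (phi : FIHom R (NShift R V) W) : FIHom R V (Shift R W) :=
  Build_FIHom R _ _ _ (toShift_lin phi) (toShift_nat phi).

Definition ofShift_fun (psi : FIHom R V (Shift R W)) X (s : fobj R (NShift R V) X) :
  fobj R W X :=
  \sum_(x : X) fm W (fill_star x) (hf psi (minus1 x) (s x)).

Lemma ofShift_lin psi X a s t :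
  ofShift_fun psi X (a *: s + t) = a *: ofShift_fun psi X s + ofShift_fun psi X t.
Proof.
rewrite /ofShift_fun scaler_sumr -big_split /=; apply: eq_bigr => x _.
by rewrite dsum_eval_lin hlin fmap_lin.
Qed.

Lemma ofShift_summand_in psi (X : finType) (z : X) v :
  ofShift_fun psi X (summand_in V z v) = fm W (fill_star z) (hf psi _ v).
Proof.
rewrite /ofShift_fun (bigD1 z) //= summand_in_self big1 ?addr0 // => x xz.
by rewrite summand_in_other 1?eq_sym // hzero (lin0 (fmap_lin _)).
Qed.

Lemma ofShift_nat psi X Y (f : Inj X Y) s :
  ofShift_fun psi Y (fm (NShift R V) f s) = fm W f (ofShift_fun psi X s).
Proof.
rewrite -{1}(sum_summand_in s) /= (lin_sum (NShift_map_lin f)).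
rewrite (lin_sum (ofShift_lin psi Y)) /ofShift_fun (lin_sum (fmap_lin f)).
apply: eq_bigr => x _.
rewrite NShift_map_summand_in -/(ofShift_fun _ _ _) ofShift_summand_in.
by rewrite (hnat _ _ _ psi) /= -!fmap_comp; apply: fmap_eq; case.
Qed.

Definition ofShift (psi : FIHom R V (Shift R W)) : FIHom R (NShift R V) W :=
  Build_FIHom R _ _ _ (ofShift_lin psi) (ofShift_nat psi).

Lemma toShiftK : cancel toShift ofShift.
Proof.
move=> phi; apply: fihom_ext => X s /=.
rewrite -{2}(sum_summand_in s) hsum; apply: eq_bigr => x _.
rewrite -(hnat _ _ _ phi) /= NShift_map_summand_in -fmap_comp.
by congr (hf phi _ (summand_in V x _)); apply: fmap_id_eq => y; apply: val_inj.
Qed.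

Lemma ofShiftK : cancel ofShift toShift.
Proof.
move=> psi; apply: fihom_ext => X v /=.
rewrite /toShift_fun /= ofShift_summand_in (hnat _ _ _ psi) /= -fmap_comp.
by apply: fmap_id_eq; case=> [|[]].
Qed.

End Transposition.

Lemma toShift_natural (V V' W W' : FIMod R) (alpha : FIHom R V' V) (beta : FIHom R W W')
  (phi : FIHom R (NShift R V) W) :
  toShift V' W' (hcomp R (hcomp R (NShiftH R alpha) phi) beta)
  = hcomp R (hcomp R alpha (toShift V W phi)) (ShiftH R beta).
Proof.
apply: fihom_ext => X v /=.
rewrite /hcomp_fun /toShift_fun /ShiftH_fun /= /hcomp_fun /=.
by rewrite NShiftH_summand_in (hnat _ _ _ alpha).
Qed.

End ShiftAdjunction.

Theorem mainTheorem1 (R : comPzRingType) :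
  exists Phi : forall V W : FIMod R, FIHom R (NShift R V) W -> FIHom R V (Shift R W),
    (forall V W : FIMod R, bijective (Phi V W)) /\
    (forall (V V' W W' : FIMod R) (alpha : FIHom R V' V) (beta : FIHom R W W')
            (phi : FIHom R (NShift R V) W),
       Phi V' W' (hcomp R (hcomp R (NShiftH R alpha) phi) beta)
       = hcomp R (hcomp R alpha (Phi V W phi)) (ShiftH R beta)).
Proof.
exists (toShift R); split; last exact: toShift_natural.
by move=> V W; exists (ofShift R V W); [exact: toShiftK | exact: ofShiftK].
Qed.
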